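(* Let $A\subset C(X)$ be a uniform algebra, let $\theta : A\to M_n(\mathbb{C})$ be a continuous unital homomorphism, and let $\alpha : A\to A$ be a unital antilinear contraction. Suppose that $$\theta_\alpha(f):=\tfrac12\bigl(\theta(f)+\theta(\alpha(f))^*\bigr)$$ satisfies $\|\theta_\alpha\|\le 1$. If $p\in A$ is a self-adjoint projection, meaning $p^2=p$ and $\overline{p}=p$, then $\theta(p)$ is a self-adjoint projection in $M_n(\mathbb{C})$.
   Context: A uniform algebra is a norm-closed subalgebra of $C(X)$, for $X$ a compact Hausdorff space, containing the constants, with the supremum norm. A map $\alpha$ is antilinear if $\alpha(\lambda f+g)=\overline\lambda\alpha(f)+\alpha(g)$. It is a contraction if $\|\alpha(f)\|\le\|f\|$, and it is unital if $\alpha(1)=1$. $M_n(\mathbb{C})$ carries the operator norm. *)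

From HB Require Import structures.
From mathcomp Require Import all_boot all_order all_algebra.
From mathcomp Require Import all_classical all_reals all_analysis.
From mathcomp Require Export complex.
Export numFieldTopology.Exports.
Import Order.TTheory GRing.Theory Num.Theory.
Set Implicit Arguments. Unset Strict Implicit. Unset Printing Implicit Defensive.
Local Open Scope ring_scope.
Local Open Scope classical_set_scope.

Section Defs.
Variable R : realType.
Local Notation C := R[i].

Definition cmod (z : C) : R := complex.Re `|z|.

Definition supnorm (X : Type) (f : X -> C) : R := sup (range (fun x => cmod (f x))).

Definition vnorm n (v : 'cV[C]_n) : R := Num.sqrt (\sum_(i < n) cmod (v i ord0) ^+ 2).

Definition opnorm n (M : 'M[C]_n) : R :=
  sup [set vnorm (M *m v) | v in [set v : 'cV[C]_n | vnorm v <= 1]].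

Definition adjmx n (M : 'M[C]_n) : 'M[C]_n := map_mx Num.conj M^T.

Definition CX (X : topologicalType) : set (X -> C) := [set f | continuous (f : X -> Num.ClosedField.sort (C : numClosedFieldType))].

Definition uniform_algebra (X : topologicalType) (A : set (X -> C)) : Prop :=
  A `<=` @CX X /\
  [/\ (forall c : C, A (fun _ => c)),
      (forall f g, A f -> A g -> A (fun x => f x + g x)),
      (forall (c : C) f, A f -> A (fun x => c * f x)),
      (forall f g, A f -> A g -> A (fun x => f x * g x)) &
      (forall g, @CX X g ->
         (forall e : R, 0 < e -> exists2 f, A f & supnorm (fun x => f x - g x) < e) ->
         A g)].

Definition cont_unital_hom (X : topologicalType) (A : set (X -> C)) n
    (theta : (X -> C) -> 'M[C]_n) : Prop :=
  [/\ (forall (c : C) f g, A f -> A g ->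
          theta (fun x => c * f x + g x) = c *: theta f + theta g),
      (forall f g, A f -> A g -> theta (fun x => f x * g x) = theta f *m theta g),
      theta (fun _ => 1) = 1%:M &
      (forall f, A f -> forall e : R, 0 < e -> exists2 d : R, 0 < d &
          forall g, A g -> supnorm (fun x => g x - f x) < d ->
            opnorm (theta g - theta f) < e)].

Definition unital_antilinear_contraction (X : topologicalType) (A : set (X -> C))
    (alpha : (X -> C) -> (X -> C)) : Prop :=
  [/\ (forall f, A f -> A (alpha f)),
      (forall (c : C) f g, A f -> A g ->
          alpha (fun x => c * f x + g x) = (fun x => Num.conj c * alpha f x + alpha g x)),
      alpha (fun _ => 1) = (fun _ => 1) &
      (forall f, A f -> supnorm (alpha f) <= supnorm f)].

Definition theta_alpha (X : Type) n (theta : (X -> C) -> 'M[C]_n)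
    (alpha : (X -> C) -> (X -> C)) (f : X -> C) : 'M[C]_n :=
  (2%:R)^-1 *: (theta f + adjmx (theta (alpha f))).

End Defs.

(* Since [p] only takes the values 0 and 1, the sup norm of [c + p] is
   max(|c|, |c + 1|), and theta_alpha(c + p) = c + T with T := theta_alpha(p).
   Hence ||c + T|| <= max(|c|, |c + 1|) for every complex c, which confines the
   numerical range of T to [0, 1]: T is hermitian and 0 <= T <= 1.  Writing
   P := theta(p) and Q := theta(alpha p), Q commutes with P and
   2T = P + Q^* = P^* + Q, so 2(TP - PT) = P^*P - PP^*.  This identity and
   0 <= T <= 1 force P^* u = u for every eigenvector u of PP^* with a nonzero
   eigenvalue; by the spectral theorem P^* PP^* = PP^*, so P^*(1 - P) = 0 and
   P = P^* P is hermitian. *)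

From mathcomp Require Import all_boot all_order all_algebra.
From mathcomp Require Import all_classical all_reals all_analysis.
From mathcomp Require Import complex ring lra.
Import Order.TTheory GRing.Theory Num.Theory.
Set Implicit Arguments. Unset Strict Implicit. Unset Printing Implicit Defensive.
Local Open Scope ring_scope.
Local Open Scope sesquilinear_scope.

Section Adjoint.
Variable C : numClosedFieldType.

Lemma trmxC_mul m n p (A : 'M[C]_(m, n)) (B : 'M[C]_(n, p)) :
  (A *m B)^t* = B^t* *m A^t*.
Proof. by rewrite trmx_mul map_mxM. Qed.

Lemma trmxCD m n (A B : 'M[C]_(m, n)) : (A + B)^t* = A^t* + B^t*.
Proof. by rewrite linearD map_mxD. Qed.

Lemma trmxCB m n (A B : 'M[C]_(m, n)) : (A - B)^t* = A^t* - B^t*.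
Proof. by rewrite linearB map_mxB. Qed.

Lemma trmxCZ m n a (A : 'M[C]_(m, n)) : (a *: A)^t* = a^* *: A^t*.
Proof. by rewrite linearZ map_mxZ. Qed.

Lemma trmxC_scalar n a : (a%:M : 'M[C]_n)^t* = a^*%:M.
Proof. by rewrite tr_scalar_mx map_scalar_mx. Qed.

Definition dotcv n (u v : 'cV[C]_n) : C := (v^t* *m u) 0 0.

Lemma dotcvE n (u v : 'cV[C]_n) : dotcv u v = \sum_i u i 0 * (v i 0)^*.
Proof. by rewrite /dotcv mxE; apply: eq_bigr => i _; rewrite !mxE mulrC. Qed.

Lemma dotcv_mulmxl m n (M : 'M[C]_(m, n)) (u : 'cV[C]_n) (v : 'cV[C]_m) :
  dotcv (M *m u) v = dotcv u (M^t* *m v).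
Proof. by rewrite /dotcv trmxC_mul trmxCK mulmxA. Qed.

Lemma dotcvC n (u v : 'cV[C]_n) : dotcv u v = (dotcv v u)^*.
Proof.
rewrite !dotcvE rmorph_sum; apply: eq_bigr => i _.
by rewrite rmorphM /= conjCK mulrC.
Qed.

Lemma dotcv_ge0 n (u : 'cV[C]_n) : 0 <= dotcv u u.
Proof. by rewrite dotcvE sumr_ge0 // => i _; rewrite mul_conjC_ge0. Qed.

Lemma dotcv_eq0 n (u : 'cV[C]_n) : dotcv u u = 0 -> u = 0.
Proof.
rewrite dotcvE => /psumr_eq0P u0; apply/colP => i; rewrite mxE.
by apply/eqP; rewrite -mul_conjC_eq0 u0 // => j _; rewrite mul_conjC_ge0.
Qed.

Lemma dotcv0r n (u : 'cV[C]_n) : dotcv u 0 = 0.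
Proof. by rewrite dotcvE big1 // => i _; rewrite !mxE conjC0 mulr0. Qed.

Lemma dotcvDl n (u w v : 'cV[C]_n) : dotcv (u + w) v = dotcv u v + dotcv w v.
Proof. by rewrite /dotcv mulmxDr mxE. Qed.

Lemma dotcvDr n (u w v : 'cV[C]_n) : dotcv v (u + w) = dotcv v u + dotcv v w.
Proof. by rewrite /dotcv trmxCD mulmxDl mxE. Qed.

Lemma dotcvBl n (u w v : 'cV[C]_n) : dotcv (u - w) v = dotcv u v - dotcv w v.
Proof. by rewrite /dotcv mulmxBr !mxE. Qed.

Lemma dotcvBr n (u w v : 'cV[C]_n) : dotcv v (u - w) = dotcv v u - dotcv v w.
Proof. by rewrite /dotcv trmxCB mulmxBl !mxE. Qed.

Lemma dotcvZl n a (u v : 'cV[C]_n) : dotcv (a *: u) v = a * dotcv u v.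
Proof. by rewrite /dotcv -scalemxAr mxE. Qed.

Lemma dotcvZr n a (u v : 'cV[C]_n) : dotcv v (a *: u) = a^* * dotcv v u.
Proof. by rewrite /dotcv trmxCZ -scalemxAl mxE. Qed.

Lemma mx_eq_col m n (A B : 'M[C]_(m, n)) :
  (forall j, A *m (delta_mx j 0 : 'cV_n) = B *m delta_mx j 0) -> A = B.
Proof.
move=> AB; apply/matrixP => i j.
by have /colP/(_ i) := AB j; rewrite -!colE !mxE.
Qed.

Lemma dotcv_delta n (M : 'M[C]_n) i j :
  dotcv (M *m (delta_mx j 0 : 'cV_n)) (delta_mx i 0) = M i j.
Proof.
rewrite dotcvE (bigD1 i) //= big1 => [|k /negPf ki]; rewrite -colE !mxE.
  by rewrite eqxx conjC1 mulr1 addr0.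
by rewrite ki conjC0 mulr0.
Qed.

Lemma trmxC_mul_eq0 m n (W : 'M[C]_(m, n)) : W^t* *m W = 0 -> W = 0.
Proof.
move=> WW; apply: mx_eq_col => j; rewrite mul0mx; apply: dotcv_eq0.
by rewrite dotcv_mulmxl mulmxA WW !mul0mx dotcv0r.
Qed.

Lemma form_eq0_mx n (N : 'M[C]_n) : (forall v, dotcv (N *m v) v = 0) -> N = 0.
Proof.
move=> N0; apply/matrixP => i j; rewrite mxE -dotcv_delta.
set u := delta_mx j 0; set w := delta_mx i 0 : 'cV_n.
have sum0 : dotcv (N *m u) w + dotcv (N *m w) u = 0.
  by have := N0 (u + w); rewrite mulmxDr dotcvDl !dotcvDr !N0 add0r addr0.
have diff0 : 'i * (dotcv (N *m w) u - dotcv (N *m u) w) = 0.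
  have := N0 (u + 'i *: w).
  rewrite mulmxDr -scalemxAr dotcvDl !dotcvDr !dotcvZl !dotcvZr !N0 conjCi.
  by move=> <-; ring.
move: diff0 => /eqP; rewrite mulf_eq0 (negPf (neq0Ci C)) subr_eq0 /= => /eqP Nwu.
by move: sum0 => /eqP; rewrite -Nwu -mulr2n mulrn_eq0 /= => /eqP.
Qed.

Lemma hermitian_of_real_form n (M : 'M[C]_n) :
  (forall v, dotcv (M *m v) v \is Num.real) -> M^t* = M.
Proof.
move=> Mreal; apply/eqP; rewrite -subr_eq0; apply/eqP/form_eq0_mx => v.
rewrite mulmxBl dotcvBl dotcv_mulmxl trmxCK dotcvC.
by rewrite (conj_Creal (Mreal v)) subrr.
Qed.

Lemma psd_form_eq0 n (M : 'M[C]_n) u : M^t* = M ->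
  (forall v, 0 <= dotcv (M *m v) v) -> dotcv (M *m u) u = 0 -> M *m u = 0.
Proof.
move=> Mh M_ge0 Muu; set w := M *m u; apply: dotcv_eq0.
set r := dotcv w w; set q := dotcv (M *m w) w.
have r_ge0 : 0 <= r by apply: dotcv_ge0.
have q1_gt0 : 0 < q + 1 by rewrite ltr_wpDl ?M_ge0.
(* For real s, <M(u + s w), u + s w> = 2 s r + s^2 q, negative at this s unless r = 0. *)
pose s := - (r / (q + 1)).
have sC : s^* = s.
  apply: conj_Creal; rewrite realN; apply: ger0_real; rewrite divr_ge0 // ltW //.
have := M_ge0 (u + s *: w).
rewrite mulmxDr -scalemxAr dotcvDl !dotcvDr !dotcvZl !dotcvZr Muu sC -/w -/q.
rewrite [dotcv (M *m w) u]dotcv_mulmxl Mh -/w -/r.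
have -> : 0 + s * r + (s * r + s * (s * q)) = - (r ^+ 2 * (q + 2%:R) / (q + 1) ^+ 2).
  by rewrite /s; field; rewrite gt_eqF.
rewrite oppr_ge0 pmulr_lle0 ?invr_gt0 ?exprn_gt0 // pmulr_lle0 ?ltr_wpDl ?M_ge0 //.
move=> r2_le0; have : r ^+ 2 == 0 by rewrite eq_le r2_le0 exprn_ge0.
by rewrite expf_eq0 => /eqP.
Qed.

Lemma commutator_of_adjoint_sum n (P Q T : 'M[C]_n) :
  Q *m P = P *m Q -> T^t* = T -> 2%:R *: T = P + Q^t* ->
  2%:R *: (T *m P - P *m T) = P^t* *m P - P *m P^t*.
Proof.
move=> QP T_herm twoT.
have twoT' : 2%:R *: T = P^t* + Q.
  by rewrite -{1}T_herm -[2%:R]conjC_nat -trmxCZ twoT trmxCD trmxCK.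
rewrite scalerBr scalemxAl scalemxAr twoT' mulmxDl mulmxDr QP.
by rewrite opprD addrACA subrr addr0.
Qed.

End Adjoint.

Section IdempotentCommutator.
Variables (C : numClosedFieldType) (n : nat) (P T : 'M[C]_n).
Hypotheses (P_idem : P *m P = P) (T_herm : T^t* = T).
Hypothesis T_ge0 : forall v, 0 <= dotcv (T *m v) v.
Hypothesis T_le1 : forall v, dotcv (T *m v) v <= dotcv v v.
Hypothesis commutator_TP : 2%:R *: (T *m P - P *m T) = P^t* *m P - P *m P^t*.

Lemma T_comm_PDtrmxC : T *m (P + P^t*) = (P + P^t*) *m T.
Proof.
have commutator_TPa : 2%:R *: (P^t* *m T - T *m P^t*) = P^t* *m P - P *m P^t*.
  have := congr1 (fun M => M^t*) commutator_TP.
  by rewrite trmxCZ !trmxCB !trmxC_mul T_herm trmxCK rmorph_nat.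
have two_neq0 : (2%:R : C) != 0 by rewrite pnatr_eq0.
move: commutator_TP; rewrite -commutator_TPa => /(scalerI two_neq0) /eqP.
rewrite subr_eq mulmxDr mulmxDl => /eqP ->.
by rewrite addrAC subrK addrC.
Qed.

Section Eigenvector.
Variables (u : 'cV[C]_n) (l : C).
Hypothesis Ku : P *m P^t* *m u = l *: u.
Let t := u - P^t* *m u.

Lemma eigenvector_in_range : l != 0 -> P *m u = u.
Proof.
move=> l_neq0; have -> : u = P *m (l^-1 *: (P^t* *m u)).
  by rewrite -scalemxAr mulmxA Ku scalerA mulVf ?scale1r.
by rewrite mulmxA P_idem.
Qed.

Hypothesis Pu : P *m u = u.

Lemma mulmx_defect : P *m t = (1 - l) *: u.
Proof. by rewrite mulmxBr Pu mulmxA Ku scalerBl scale1r. Qed.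

Lemma trmxC_mulmx_defect : P^t* *m t = 0.
Proof. by rewrite mulmxBr mulmxA -trmxC_mul P_idem subrr. Qed.

Lemma dotcv_defect_r : dotcv u t = 0.
Proof. by rewrite dotcvBr -dotcv_mulmxl Pu subrr. Qed.

Lemma dotcv_defect : dotcv t t = (l - 1) * dotcv u u.
Proof.
rewrite {2}/t dotcvBr dotcvC dotcv_defect_r conjC0 -dotcv_mulmxl mulmx_defect.
by rewrite dotcvZl sub0r -mulNr opprB.
Qed.

Lemma dotcv_T_defect : 2%:R * dotcv (T *m u) t = (1 - l)^* * dotcv u u.
Proof.
have := congr1 (fun M => dotcv (M *m u) t) commutator_TP.
rewrite -scalemxAl dotcvZl !mulmxBl !dotcvBl -!mulmxA Pu.
rewrite [dotcv (P *m (T *m u)) t]dotcv_mulmxl trmxC_mulmx_defect dotcv0r subr0 => ->.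
rewrite [dotcv (P^t* *m u) t]dotcv_mulmxl trmxCK mulmx_defect dotcvZr.
by rewrite mulmxA Ku dotcvZl dotcv_defect_r mulr0 subr0.
Qed.

Lemma dotcv_T_defect_defect :
  dotcv (T *m t) t = (1 - l)^* * (dotcv u u - dotcv (T *m u) u).
Proof.
have Pau : P^t* *m u = u - t by rewrite /t subKr.
have := congr1 (fun M => dotcv (M *m u) t) T_comm_PDtrmxC.
rewrite -!mulmxA mulmxDl Pu Pau mulmxDr mulmxBr dotcvDl dotcvBl.
rewrite [dotcv ((P + _) *m _) _]dotcv_mulmxl trmxCD trmxCK mulmxDl.
rewrite trmxC_mulmx_defect mulmx_defect add0r dotcvZr.
by rewrite mulrBr -dotcv_T_defect => <-; ring.
Qed.

(* As (1 - l)^* <= 0, [dotcv_T_defect_defect] gives <Tt, t> <= 0, hence [Tt = 0];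
   then [dotcv_T_defect] forces [l = 1], i.e. [t = 0]. *)
Lemma trmxC_fixes_eigenvector : P^t* *m u = u.
Proof.
have [->|u_neq0] := eqVneq u 0; first by rewrite mulmx0.
have a_gt0 : 0 < dotcv u u.
  by rewrite lt_def dotcv_ge0 andbT; apply: contra u_neq0 => /eqP/dotcv_eq0 ->.
have c_le0 : (1 - l)^* <= 0.
  have -> : 1 - l = - (dotcv t t / dotcv u u).
    by rewrite dotcv_defect mulfK ?gt_eqF // opprB.
  have ratio_ge0 : 0 <= dotcv t t / dotcv u u by rewrite divr_ge0 ?dotcv_ge0.
  by rewrite rmorphN /= conj_Creal ?oppr_le0 // ger0_real.
have Tt : T *m t = 0.
  apply: psd_form_eq0 => //; apply/eqP; rewrite eq_le T_ge0 andbT.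
  by rewrite dotcv_T_defect_defect mulr_le0_ge0 ?subr_ge0 ?T_le1.
have : (1 - l)^* * dotcv u u = 0.
  by rewrite -dotcv_T_defect dotcv_mulmxl T_herm Tt dotcv0r mulr0.
move/eqP; rewrite mulf_eq0 (gt_eqF a_gt0) orbF conjC_eq0 subr_eq0 => /eqP l1.
apply/eqP; rewrite eq_sym -subr_eq0; apply/eqP/dotcv_eq0.
by rewrite dotcv_defect -l1 subrr mul0r.
Qed.

End Eigenvector.

Lemma trmxC_fixes_eigenvector_image (v : 'cV_n) l :
  P *m P^t* *m v = l *: v -> P^t* *m (P *m P^t* *m v) = P *m P^t* *m v.
Proof.
move=> Kv; rewrite Kv -scalemxAr.
have [->|l_neq0] := eqVneq l 0; first by rewrite !scale0r.
by rewrite (trmxC_fixes_eigenvector Kv (eigenvector_in_range Kv l_neq0)).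
Qed.

Lemma trmxC_fixes_PPtrmxC : P^t* *m (P *m P^t*) = P *m P^t*.
Proof.
set K := P *m P^t*.
have /orthomx_spectralP K_diag : K \is normalmx.
  by rewrite qualifE /K trmxC_mul trmxCK.
set U := spectralmx K in K_diag; set d := spectral_diag K in K_diag.
have U_unit : U \in unitmx := spectral_unit K.
(* The columns of [invmx U] form an eigenbasis of [K]. *)
rewrite -[LHS](mulmxKV U_unit) -[RHS](mulmxKV U_unit); congr (_ *m U).
apply: mx_eq_col => j; rewrite -!mulmxA !(mulmxA P).
apply: (trmxC_fixes_eigenvector_image (l := d 0 j)).
have diag_delta : diag_mx d *m delta_mx j 0 = d 0 j *: (delta_mx j 0 : 'cV_n).
  apply/colP => i; rewrite mul_diag_mx !mxE.
  by have [->|_] := eqVneq i j; rewrite ?mulr0.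
by rewrite -/K K_diag -!mulmxA (mulmxA U) mulmxV // mul1mx diag_delta scalemxAr.
Qed.

Theorem idempotent_hermitian : P^t* = P.
Proof.
have PaP : P^t* = P^t* *m P.
  set W := P^t* *m (1%:M - P).
  have W0 : W = 0.
    apply: trmxC_mul_eq0.
    rewrite /W trmxC_mul trmxCK trmxCB trmxC_scalar conjC1 mulmxA -(mulmxA _ P).
    by rewrite mulmxBl mul1mx trmxC_fixes_PPtrmxC subrr mul0mx.
  by apply/eqP; rewrite -subr_eq0 -{1}(mulmx1 (P^t*)) -mulmxBr -/W W0.
by rewrite -[in RHS](trmxCK P) PaP trmxC_mul trmxCK.
Qed.

End IdempotentCommutator.

(* With c = s + i t and z = x + i y, the hypothesis reads
   a |c|^2 + 2 Re (c^* z) <= a max(|c|, |c + 1|)^2.  The points c = -1/2 + i t,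
   where |c| = |c + 1|, force y = 0 <= x, and c = K >= 0 forces x <= a. *)
Lemma disc_bound_unit_interval (R : realFieldType) (a x y : R) : 0 <= a ->
  (forall s t Q : R, s ^+ 2 + t ^+ 2 <= Q -> (s + 1) ^+ 2 + t ^+ 2 <= Q ->
     a * (s ^+ 2 + t ^+ 2) + 2 * (s * x + t * y) <= a * Q) ->
  y = 0 /\ 0 <= x <= a.
Proof.
move=> a_ge0 bound.
have ty_le t : 2 * t * y <= x.
  have := bound (- 2^-1) t (4^-1 + t ^+ 2).
  have -> : - 2^-1 + 1 = 2^-1 :> R by field.
  have sqr_half : (2^-1) ^+ 2 = 4^-1 :> R by field.
  rewrite sqrrN sqr_half lexx => /(_ isT isT); lra.
have y0 : y = 0.
  apply/eqP/negPn/negP => y_neq0.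
  have := ty_le ((x + 1) / (2 * y)).
  have -> : 2 * ((x + 1) / (2 * y)) * y = x + 1 by field; rewrite y_neq0.
  lra.
have Kx_le K : 0 <= K -> 2 * K * x <= 2 * K * a + a.
  move=> K_ge0; have := bound K 0 ((K + 1) ^+ 2).
  rewrite !expr0n /= !addr0 lexx; nra.
have x_ge0 : 0 <= x by have := ty_le 0; lra.
split=> //; rewrite x_ge0 /=.
rewrite leNgt; apply/negP => a_lt_x.
have K_ge0 : 0 <= (a + 1) / (x - a) by apply: divr_ge0; lra.
have := Kx_le _ K_ge0.
have -> : 2 * ((a + 1) / (x - a)) * x = 2 * ((a + 1) / (x - a)) * a + 2 * (a + 1).
  by field; rewrite subr_eq0 gt_eqF.
lra.
Qed.

Section Norms.
Variable R : realType.
Local Notation C := R[i].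

Lemma cmodE (z : C) : (cmod z)%:C%C = `|z|.
Proof. by rewrite /cmod normc_def. Qed.

Lemma cmod_ge0 (z : C) : 0 <= cmod z.
Proof. by rewrite /cmod normc_def sqrtr_ge0. Qed.

Lemma cmod_sqr (z : C) : cmod z ^+ 2 = complex.Re z ^+ 2 + complex.Im z ^+ 2.
Proof. by rewrite /cmod normc_def /= sqr_sqrtr // addr_ge0 ?sqr_ge0. Qed.

Lemma vnorm_sqr n (v : 'cV[C]_n) : (vnorm v ^+ 2)%:C%C = dotcv v v.
Proof.
rewrite sqr_sqrtr ?sumr_ge0 // => [|i _]; last by rewrite exprn_ge0 ?cmod_ge0.
rewrite rmorph_sum dotcvE; apply: eq_bigr => i _.
by rewrite rmorphXn /= cmodE normCK.
Qed.

Lemma vnorm_ge0 n (v : 'cV[C]_n) : 0 <= vnorm v.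
Proof. exact: sqrtr_ge0. Qed.

Lemma cmod_le_vnorm n (v : 'cV[C]_n) i : cmod (v i 0) <= vnorm v.
Proof.
rewrite -[cmod _]ger0_norm ?cmod_ge0 // -sqrtr_sqr ler_wsqrtr //.
by rewrite (bigD1 i) //= lerDl sumr_ge0 // => j _; rewrite exprn_ge0 ?cmod_ge0.
Qed.

Lemma vnorm_le_opnorm n (M : 'M[C]_n) v : vnorm v <= 1 -> vnorm (M *m v) <= opnorm M.
Proof.
move=> v_le1; apply: ub_le_sup; last by exists v.
exists (Num.sqrt (\sum_i (\sum_j cmod (M i j)) ^+ 2)) => _ [w w_le1 <-].
rewrite ler_wsqrtr // ler_sum // => i _.
have coord_le : cmod ((M *m w) i 0) <= \sum_j cmod (M i j).
  rewrite -lecR cmodE rmorph_sum mxE; apply: le_trans (ler_norm_sum _ _ _) _.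
  apply: ler_sum => j _ /=; rewrite normrM cmodE ler_piMr ?normr_ge0 //.
  by rewrite -cmodE -[1]/(1%:C%C) lecR (le_trans (cmod_le_vnorm w j)).
by rewrite ler_pXn2r ?nnegrE ?cmod_ge0 ?sumr_ge0 // => j _; rewrite cmod_ge0.
Qed.

Lemma dotcv_mulmx_le_opnorm n (M : 'M[C]_n) v :
  dotcv (M *m v) (M *m v) <= (opnorm M ^+ 2)%:C%C * dotcv v v.
Proof.
have [->|v_neq0] := eqVneq v 0; first by rewrite mulmx0 !dotcv0r mulr0.
rewrite -[dotcv v v]vnorm_sqr; set r := vnorm v.
have r_gt0 : 0 < r.
  rewrite lt_def vnorm_ge0 andbT; apply: contra v_neq0 => /eqP r0.
  by apply/eqP/dotcv_eq0; rewrite -vnorm_sqr -/r r0 expr0n.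
set k : C := (r^-1)%:C%C.
have kC : k^* = k by apply: conjc_real.
have k_sqr : k * k * (r ^+ 2)%:C%C = 1.
  by rewrite /k -!rmorphM /=; congr (_%:C%C); field; rewrite gt_eqF.
have Mv_sqr : dotcv (M *m (k *: v)) (M *m (k *: v)) = k * k * dotcv (M *m v) (M *m v).
  by rewrite -scalemxAr dotcvZl dotcvZr kC mulrA.
have kv_le1 : vnorm (k *: v) <= 1.
  rewrite -(@expr_le1 _ 2) ?vnorm_ge0 // -lecR vnorm_sqr dotcvZl dotcvZr kC.
  by rewrite -vnorm_sqr -/r mulrA k_sqr.
have le_op := vnorm_le_opnorm M kv_le1.
have op_ge0 := le_trans (vnorm_ge0 _) le_op.
rewrite -(@ler_pXn2r _ 2) ?nnegrE ?vnorm_ge0 // -lecR vnorm_sqr Mv_sqr in le_op.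
rewrite -[X in X <= _]mul1r -k_sqr [k * k * _]mulrC -mulrA [X in _ <= X]mulrC.
by apply: ler_wpM2l; rewrite ?ler0c ?sqr_ge0.
Qed.

Lemma opnorm_ge0 n (M : 'M[C]_n) : 0 <= opnorm M.
Proof.
have vnorm0 : vnorm (0 : 'cV[C]_n) = 0.
  by rewrite /vnorm big1 ?sqrtr0 // => i _; rewrite mxE /cmod normr0 expr0n.
by have := vnorm_le_opnorm M (v := 0); rewrite mulmx0 vnorm0 => ->.
Qed.

Lemma numerical_range_unit_interval n (T : 'M[C]_n) :
  (forall c : C, opnorm (c%:M + T) <= Num.max (cmod c) (cmod (c + 1))) ->
  forall v, 0 <= dotcv (T *m v) v <= dotcv v v.
Proof.
move=> T_bound v.
set a := complex.Re (dotcv v v).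
have Ea : a%:C%C = dotcv v v by apply/RRe_real/ger0_real/dotcv_ge0.
have a_ge0 : 0 <= a by rewrite -lecR Ea dotcv_ge0.
have w_ge0 := dotcv_ge0 (T *m v).
case Ez : (dotcv (T *m v) v) => [x y].
have [y0 /andP[x_ge0 x_le_a]] : y = 0 /\ 0 <= x <= a.
  apply: (disc_bound_unit_interval a_ge0) => s t Q sQ s1Q.
  set c : C := (s +i* t)%C.
  have Q_ge0 : 0 <= Q by apply: le_trans sQ; rewrite addr_ge0 ?sqr_ge0.
  have op_le : opnorm (c%:M + T) ^+ 2 <= Q.
    rewrite -(sqr_sqrtr Q_ge0) ler_pXn2r ?nnegrE ?opnorm_ge0 ?sqrtr_ge0 //.
    apply: le_trans (T_bound c) _; rewrite ge_max.
    rewrite -(ger0_norm (cmod_ge0 c)) -(ger0_norm (cmod_ge0 (c + 1))) -!sqrtr_sqr.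
    by rewrite !ler_wsqrtr // !cmod_sqr /=; simpc.
  have := dotcv_mulmx_le_opnorm (c%:M + T) v.
  rewrite mulmxDl mul_scalar_mx dotcvDl !dotcvDr !dotcvZl !dotcvZr.
  rewrite [dotcv v (T *m v)]dotcvC Ez -Ea.
  move: w_ge0; case: (dotcv (T *m v) (T *m v)) => w1 w2.
  rewrite !lecE /= => /andP[_ w1_ge0] /andP[_].
  have := ler_wpM2r a_ge0 op_le; simpc; nra.
by rewrite -Ea y0 !lecE /= eqxx x_ge0 x_le_a.
Qed.

Lemma supnorm_le (X : Type) (f : X -> C) (B : R) :
  0 <= B -> (forall x, cmod (f x) <= B) -> supnorm f <= B.
Proof.
move=> B_ge0 f_le; rewrite /supnorm.
have [[x0 _]|X0] := pselect (exists x : X, True).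
  by apply: ge_sup => [|_ [x _ <-]]; [exists (cmod (f x0)), x0 | exact: f_le].
have -> : range (fun x => cmod (f x)) = set0.
  by apply/seteqP; split => // y [x _ _]; apply: X0; exists x.
by rewrite sup0.
Qed.

Lemma supnorm_add_idem (X : Type) (p : X -> C) (c : C) :
  (forall x, p x * p x = p x) ->
  supnorm (fun x => c + p x) <= Num.max (cmod c) (cmod (c + 1)).
Proof.
move=> p_idem; apply: supnorm_le => [|x]; first by rewrite le_max cmod_ge0.
have /eqP : p x * (p x - 1) = 0 by rewrite mulrBr mulr1 p_idem subrr.
by rewrite mulf_eq0 subr_eq0 => /orP[] /eqP ->; rewrite ?addr0 le_max lexx ?orbT.
Qed.

Lemma theta_alpha_addC (X : topologicalType) (A : set (X -> C)) n
    (theta : (X -> C) -> 'M[C]_n) (alpha : (X -> C) -> (X -> C)) c f :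
  uniform_algebra A -> cont_unital_hom A theta ->
  unital_antilinear_contraction A alpha -> A f ->
  theta_alpha theta alpha (fun x => c + f x) = c%:M + theta_alpha theta alpha f.
Proof.
move=> [_ [A_const _ _ _ _]] [theta_lin _ theta1 _] [A_alpha alpha_lin alpha1 _] Af.
have -> : (fun x => c + f x) = (fun x => c * (fun _ => 1) x + f x).
  by apply: funext => x; rewrite mulr1.
have [A1 Aaf] := (A_const 1, A_alpha f Af).
rewrite /theta_alpha alpha_lin // alpha1 !theta_lin // theta1.
rewrite /adjmx trmxCD trmxCZ conjCK trmxC_scalar conjC1.
rewrite addrACA -scalerDl scalerDr scalerA scalemx1.
by congr (_%:M + _); field.
Qed.

End Norms.

Theorem theorem5p1 (R : realType) (X : topologicalType)
  (hXc : compact [set: X]) (hXh : hausdorff_space X)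
  (A : set (X -> R[i])) (hA : uniform_algebra A)
  (n : nat) (theta : (X -> R[i]) -> 'M[R[i]]_n) (htheta : cont_unital_hom A theta)
  (alpha : (X -> R[i]) -> (X -> R[i])) (halpha : unital_antilinear_contraction A alpha)
  (hnorm : forall f, A f -> opnorm (theta_alpha theta alpha f) <= supnorm f)
  (p : X -> R[i]) (hp : A p)
  (hp2 : (fun x => p x * p x) = p) (hpconj : (fun x => Num.conj (p x)) = p) :
  theta p *m theta p = theta p /\ adjmx (theta p) = theta p.
Proof.
have [_ [A_const A_add _ _ _]] := hA.
have [_ theta_mul _ _] := htheta.
have [A_alpha _ _ _] := halpha.
set P := theta p; set Q := theta (alpha p); set T := theta_alpha theta alpha p.
have P_idem : P *m P = P by rewrite /P -theta_mul // hp2.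
split=> //.
have T_bound c : opnorm (c%:M + T) <= Num.max (cmod c) (cmod (c + 1)).
  rewrite -(theta_alpha_addC c hA htheta halpha hp).
  apply: le_trans (hnorm _ (A_add _ _ (A_const c) hp)) (supnorm_add_idem _ _).
  by move=> x; have := congr1 (@^~ x) hp2.
have T_range := numerical_range_unit_interval T_bound.
have T_herm : T^t* = T.
  by apply: hermitian_of_real_form => v; case/andP: (T_range v) => /ger0_real.
have QP : Q *m P = P *m Q.
  have Aap := A_alpha p hp.
  by rewrite /P /Q -!theta_mul //; congr (theta _); apply: funext => x; rewrite mulrC.
have twoT : 2%:R *: T = P + Q^t*.
  by rewrite /T /theta_alpha scalerA mulfV ?scale1r ?pnatr_eq0.
apply: (idempotent_hermitian P_idem T_herm) => [v|v|].
- by have /andP[] := T_range v.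
- by have /andP[] := T_range v.
- exact: commutator_of_adjoint_sum QP T_herm twoT.
Qed.
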